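(* Let $\mathcal{R}^{rsc}$ be a rich single-crossing domain and $U\subseteq\mathcal{R}^{rsc}$. If $R_0=\inf_{\prec}U$ exists in $\mathcal{R}^{rsc}$, then $R_0$ belongs to the closure of $U$ in the order topology; likewise, if $R^0=\sup_{\prec}U$ exists, then $R^0$ belongs to the closure of $U$.
   Context: $\mathbb{Z}=[0,\infty)\times[0,1]$. Classical preferences, the single-crossing property, rich single-crossing domains $\mathcal{R}^{rsc}$ and the relation $\prec$ are as follows. A classical preference is a complete transitive relation $R$ on $\mathbb{Z}$ (strict part $P$, indifference $I$) that is strictly decreasing in $t$ for every fixed $q$, strictly increasing in $q$ for every fixed $t$, and has closed upper and lower contour sets. Two distinct classical preferences satisfy single-crossing if any indifference set of one meets any indifference set of the other in at most one point. $\mathcal{R}^{rsc}$ is a set of classical preferences, pairwise single-crossing, such that for all $(t',q'),(t'',q'')$ with $t'<t''$, $q'<q''$ some member is indifferent between them. For distinct $R',R''$, $R'\prec R''$ means that for every $z\in\mathbb{Z}$, $\square(z)\cap\{x:xR''z\}\subseteq\square(z)\cap\{x:xR'z\}$, where $\square(z)=\{x: x=z\text{ or } x<z\}$ and $(t',q')<(t'',q'')$ means $t'<t''$ and $q'<q''$. $\prec$ is a linear order on $\mathcal{R}^{rsc}$; $\inf_\prec,\sup_\prec$ are taken w.r.t. it, and $\mathcal{R}^{rsc}$ carries the order topology. *)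

From Stdlib Require Import Reals.
From Coquelicot Require Import Coquelicot.
Open Scope R_scope.

Definition bundle := (R * R)%type.
Definition inZ (z : bundle) : Prop := 0 <= fst z /\ 0 <= snd z <= 1.

(* A preference: a binary relation on bundles (only its restriction to Z matters). *)
Definition pref := bundle -> bundle -> Prop.

Definition Pstrict (Rr : pref) (x y : bundle) : Prop := Rr x y /\ ~ Rr y x.
Definition Indiff (Rr : pref) (x y : bundle) : Prop := Rr x y /\ Rr y x.

Definition closed_in_Z (S : bundle -> Prop) : Prop :=
  exists C : bundle -> Prop, closed C /\ forall x, S x <-> (inZ x /\ C x).

Definition classical (Rr : pref) : Prop :=
  (forall x y, inZ x -> inZ y -> Rr x y \/ Rr y x) /\
  (forall x y w, inZ x -> inZ y -> inZ w -> Rr x y -> Rr y w -> Rr x w) /\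
  (forall t t' q, 0 <= t -> t < t' -> 0 <= q <= 1 -> Pstrict Rr (t, q) (t', q)) /\
  (forall t q q', 0 <= t -> 0 <= q -> q < q' -> q' <= 1 -> Pstrict Rr (t, q') (t, q)) /\
  (forall z, inZ z ->
     closed_in_Z (fun x => inZ x /\ Rr x z) /\
     closed_in_Z (fun x => inZ x /\ Rr z x)).

Definition single_crossing (R1 R2 : pref) : Prop :=
  forall z1 z2 x y, inZ z1 -> inZ z2 -> inZ x -> inZ y ->
    Indiff R1 x z1 -> Indiff R1 y z1 ->
    Indiff R2 x z2 -> Indiff R2 y z2 -> x = y.

Definition rich_single_crossing (D : pref -> Prop) : Prop :=
  (forall Rr, D Rr -> classical Rr) /\
  (forall R1 R2, D R1 -> D R2 -> R1 <> R2 -> single_crossing R1 R2) /\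
  (forall t' q' t'' q'', inZ (t', q') -> inZ (t'', q'') -> t' < t'' -> q' < q'' ->
     exists Rr, D Rr /\ Indiff Rr (t', q') (t'', q'')).

Definition blt (x z : bundle) : Prop := fst x < fst z /\ snd x < snd z.
Definition box (z : bundle) (x : bundle) : Prop := inZ x /\ (x = z \/ blt x z).

Definition prec (R1 R2 : pref) : Prop :=
  R1 <> R2 /\
  forall z, inZ z -> forall x, box z x -> R2 x z -> R1 x z.

Definition is_inf (D U : pref -> Prop) (R0 : pref) : Prop :=
  D R0 /\
  (forall Rr, U Rr -> R0 = Rr \/ prec R0 Rr) /\
  (forall L, D L -> (forall Rr, U Rr -> L = Rr \/ prec L Rr) -> L = R0 \/ prec L R0).

Definition is_sup (D U : pref -> Prop) (R0 : pref) : Prop :=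
  D R0 /\
  (forall Rr, U Rr -> Rr = R0 \/ prec Rr R0) /\
  (forall M, D M -> (forall Rr, U Rr -> Rr = M \/ prec Rr M) -> R0 = M \/ prec R0 M).

Inductive order_open (D : pref -> Prop) : (pref -> Prop) -> Prop :=
| oo_whole : order_open D D
| oo_lray (a : pref) : D a -> order_open D (fun Rr => D Rr /\ prec a Rr)
| oo_rray (b : pref) : D b -> order_open D (fun Rr => D Rr /\ prec Rr b)
| oo_inter (O1 O2 : pref -> Prop) :
    order_open D O1 -> order_open D O2 -> order_open D (fun Rr => O1 Rr /\ O2 Rr)
| oo_union (F : (pref -> Prop) -> Prop) :
    (forall O, F O -> order_open D O) ->
    order_open D (fun Rr => exists O, F O /\ O Rr).

Definition in_order_closure (D U : pref -> Prop) (R0 : pref) : Prop :=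
  D R0 /\
  forall O, order_open D O -> O R0 -> exists Rr, U Rr /\ O Rr.

From Stdlib Require Import Reals Lra Classical.
From Coquelicot Require Import Coquelicot.
Open Scope R_scope.

(* Say that [R1] is violated against [R2] at [z] when some [x] below [z] has
   [x P2 z] and [z P1 x]; then [R1 ≺ R2] means that [R1] is violated nowhere.
   At an interior bundle [z] the intermediate value theorem produces a point
   below [z] that is [R1]-indifferent to [z]; single crossing makes [R2] rank it
   strictly, so [R1] or [R2] is violated at [z], and a connectedness argument
   along the rows below [z] shows that not both are.  The violation sets are
   open, so by connectedness of the interior of [Z] one of them is empty: [≺]
   is a linear order.  Richness provides elements above and below every
   preference, hence every order-open set around [R0] contains an open
   interval around it, and an infimum (supremum) outside [U] is approached by
   elements of [U] from above (below). *)

Definition open_in_interval (a b : R) (A : R -> Prop) : Prop :=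
  forall s, a <= s <= b -> A s -> exists e, 0 < e /\
    forall s', a <= s' <= b -> Rabs (s' - s) < e -> A s'.

Lemma interval_not_separated (a b : R) (A B : R -> Prop) :
  a <= b -> A a -> B b ->
  (forall s, a <= s <= b -> A s \/ B s) ->
  (forall s, a <= s <= b -> A s -> B s -> False) ->
  open_in_interval a b A -> open_in_interval a b B -> False.
Proof.
  intros hab hA hB cover disj openA openB.
  set (E := fun s => a <= s <= b /\ A s).
  assert (bE : bound E) by (exists b; intros s [hs _]; lra).
  assert (nE : exists x, E x) by (exists a; split; [lra|exact hA]).
  destruct (completeness E bE nE) as [m [ub lub]].
  assert (am : a <= m) by (apply ub; split; [lra|exact hA]).
  assert (mb : m <= b) by (apply lub; intros s [hs _]; lra).
  destruct (cover m (conj am mb)) as [Am|Bm].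
  - destruct (Req_dec m b) as [->|mnb].
    + exact (disj b (conj am (Rle_refl b)) Am hB).
    + destruct (openA m (conj am mb) Am) as [e [he He]].
      set (s := Rmin b (m + e / 2)).
      assert (hs : m < s <= b) by (unfold s, Rmin; destruct (Rle_dec b (m + e / 2)); lra).
      assert (s <= m); [|lra].
      apply ub; split; [lra|]. apply He; [lra|].
      apply Rabs_def1; unfold s, Rmin in *; destruct (Rle_dec b (m + e / 2)); lra.
  - destruct (openB m (conj am mb) Bm) as [e [he He]].
    assert (exists s, E s /\ m - e / 2 < s) as [s [[hs As] hms]].
    { apply NNPP; intro Hn.
      assert (m <= m - e / 2); [|lra].
      apply lub; intros s Es. apply Rnot_lt_le; intro hs. apply Hn; exists s; auto. }
    assert (s <= m) by (apply ub; split; auto).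
    apply (disj s hs As), He; [lra|]. apply Rabs_def1; lra.
Qed.

Definition Zlocally (P : bundle -> Prop) (w : bundle) : Prop := exists e, 0 < e /\
  forall v, inZ v -> Rabs (fst v - fst w) < e -> Rabs (snd v - snd w) < e -> P v.

Lemma closed_in_Z_compl_locally (S : bundle -> Prop) (w : bundle) :
  closed_in_Z S -> inZ w -> ~ S w -> Zlocally (fun v => ~ S v) w.
Proof.
  intros [C [hC hS]] Zw nS.
  assert (nC : ~ C w) by (intro Cw; apply nS, hS; auto).
  assert (L : locally w (fun x => ~ C x)) by (apply NNPP; intro nL; apply nC, hC, nL).
  destruct L as [eps Heps].
  exists eps; split; [apply cond_pos|].
  intros v Zv h1 h2 Sv. apply hS in Sv as [_ Cv].
  apply (Heps v); [split; assumption | exact Cv].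
Qed.

Lemma Zlocally_and (P Q : bundle -> Prop) (w : bundle) :
  Zlocally P w -> Zlocally Q w -> Zlocally (fun v => P v /\ Q v) w.
Proof.
  intros [e1 [h1 H1]] [e2 [h2 H2]]. exists (Rmin e1 e2); split; [apply Rmin_glb_lt; auto|].
  pose proof (Rmin_l e1 e2); pose proof (Rmin_r e1 e2).
  intros v Zv d1 d2; split; [apply H1|apply H2]; auto; lra.
Qed.

Lemma Zlocally_right (P : bundle -> Prop) (t q c : R) :
  inZ (t, q) -> Zlocally P (t, q) -> t < c -> exists t', t < t' < c /\ P (t', q).
Proof.
  intros [ht hq] [e [he He]] htc.
  pose proof (Rmin_l e (c - t)); pose proof (Rmin_r e (c - t)).
  assert (0 < Rmin e (c - t)) by (apply Rmin_glb_lt; lra).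
  exists (t + Rmin e (c - t) / 2); split; [lra|].
  apply He; simpl in *; [split; simpl; lra | apply Rabs_def1 | apply Rabs_def1]; lra.
Qed.

Lemma Zlocally_left (P : bundle -> Prop) (t q c : R) :
  inZ (t, q) -> Zlocally P (t, q) -> 0 <= c < t -> exists t', c < t' < t /\ P (t', q).
Proof.
  intros [ht hq] [e [he He]] hct.
  pose proof (Rmin_l e (t - c)); pose proof (Rmin_r e (t - c)).
  assert (0 < Rmin e (t - c)) by (apply Rmin_glb_lt; lra).
  exists (t - Rmin e (t - c) / 2); split; [lra|].
  apply He; simpl in *; [split; simpl; lra | apply Rabs_def1 | apply Rabs_def1]; lra.
Qed.

Lemma Zlocally_up (P : bundle -> Prop) (t q c : R) :
  inZ (t, q) -> Zlocally P (t, q) -> q < c -> c <= 1 -> exists q', q < q' < c /\ P (t, q').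
Proof.
  intros [ht hq] [e [he He]] hqc hc1.
  pose proof (Rmin_l e (c - q)); pose proof (Rmin_r e (c - q)).
  assert (0 < Rmin e (c - q)) by (apply Rmin_glb_lt; lra).
  exists (q + Rmin e (c - q) / 2); split; [lra|].
  apply He; simpl in *; [split; simpl; lra | apply Rabs_def1 | apply Rabs_def1]; lra.
Qed.

Definition seg (p0 p1 : bundle) (s : R) : bundle :=
  (fst p0 + s * (fst p1 - fst p0), snd p0 + s * (snd p1 - snd p0)).

Lemma seg0 (p0 p1 : bundle) : seg p0 p1 0 = p0.
Proof. destruct p0; unfold seg; simpl; f_equal; ring. Qed.

Lemma seg1 (p0 p1 : bundle) : seg p0 p1 1 = p1.
Proof. destruct p0, p1; unfold seg; simpl; f_equal; ring. Qed.

Lemma seg_inZ (p0 p1 : bundle) (s : R) :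
  inZ p0 -> inZ p1 -> 0 <= s <= 1 -> inZ (seg p0 p1 s).
Proof. unfold inZ, seg; simpl; intros; nra. Qed.

Lemma seg_pos (p0 p1 : bundle) (s : R) :
  0 < fst p0 -> 0 < snd p0 -> 0 < fst p1 -> 0 < snd p1 -> 0 <= s <= 1 ->
  0 < fst (seg p0 p1 s) /\ 0 < snd (seg p0 p1 s).
Proof. unfold seg; simpl; intros; split; nra. Qed.

Lemma Zlocally_seg (P : bundle -> Prop) (p0 p1 : bundle) (s : R) :
  inZ p0 -> inZ p1 -> Zlocally P (seg p0 p1 s) ->
  exists d, 0 < d /\ forall s', 0 <= s' <= 1 -> Rabs (s' - s) < d -> P (seg p0 p1 s').
Proof.
  intros Z0 Z1 [e [he He]].
  set (K := 1 + Rabs (fst p1 - fst p0) + Rabs (snd p1 - snd p0)).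
  pose proof (Rabs_pos (fst p1 - fst p0)); pose proof (Rabs_pos (snd p1 - snd p0)).
  assert (HK : 1 <= K) by (unfold K; lra).
  assert (scale : forall u s', Rabs u <= K -> Rabs (s' - s) < e / K -> Rabs ((s' - s) * u) < e).
  { intros u s' hu hs'. rewrite Rabs_mult.
    apply Rle_lt_trans with (Rabs (s' - s) * K);
      [apply Rmult_le_compat_l; [apply Rabs_pos | exact hu]|].
    replace e with (e / K * K) by (field; lra).
    apply Rmult_lt_compat_r; lra. }
  exists (e / K); split; [apply Rdiv_lt_0_compat; lra|].
  intros s' hs' hd. apply He; [apply seg_inZ; auto | |]; unfold seg; simpl.
  - replace (_ - _) with ((s' - s) * (fst p1 - fst p0)) by ring.
    apply scale; [unfold K; lra | exact hd].
  - replace (_ - _) with ((s' - s) * (snd p1 - snd p0)) by ring.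
    apply scale; [unfold K; lra | exact hd].
Qed.

Section Classical.
Variable Rr : pref.
Hypothesis hc : classical Rr.

Lemma pref_total (x y : bundle) : inZ x -> inZ y -> Rr x y \/ Rr y x.
Proof. destruct hc as [h _]; auto. Qed.

Lemma pref_refl (x : bundle) : inZ x -> Rr x x.
Proof. intro; destruct (pref_total x x); auto. Qed.

Lemma pref_trans (x y w : bundle) : inZ x -> inZ y -> inZ w -> Rr x y -> Rr y w -> Rr x w.
Proof. destruct hc as [_ [h _]]; eauto. Qed.

Lemma pref_compl (x y : bundle) : inZ x -> inZ y -> ~ Rr x y -> Rr y x.
Proof. intros; destruct (pref_total x y); tauto. Qed.

Lemma pref_t_lt (t t' q : R) : 0 <= t -> t < t' -> 0 <= q <= 1 -> ~ Rr (t', q) (t, q).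
Proof. destruct hc as [_ [_ [h _]]]; intros; apply h; auto. Qed.

Lemma pref_q_lt (t q q' : R) : 0 <= t -> 0 <= q -> q < q' -> q' <= 1 -> ~ Rr (t, q) (t, q').
Proof. destruct hc as [_ [_ [_ [h _]]]]; intros; apply h; auto. Qed.

Lemma pref_t_le (t t' q : R) : 0 <= t -> t <= t' -> 0 <= q <= 1 -> Rr (t, q) (t', q).
Proof.
  intros ht htt' hq. destruct (Rle_lt_or_eq_dec _ _ htt') as [lt|<-].
  - apply pref_compl; [split; simpl; lra | split; simpl; lra | exact (pref_t_lt t t' q ht lt hq)].
  - apply pref_refl; split; simpl; lra.
Qed.

Lemma pref_q_le (t q q' : R) : 0 <= t -> 0 <= q -> q <= q' -> q' <= 1 -> Rr (t, q') (t, q).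
Proof.
  intros ht hq hqq' hq'. destruct (Rle_lt_or_eq_dec _ _ hqq') as [lt|<-].
  - apply pref_compl; [split; simpl; lra | split; simpl; lra | exact (pref_q_lt t q q' ht hq lt hq')].
  - apply pref_refl; split; simpl; lra.
Qed.

Lemma strict_lower_locally (z w : bundle) :
  inZ z -> inZ w -> ~ Rr w z -> Zlocally (fun v => ~ Rr v z) w.
Proof.
  intros Zz Zw n. destruct hc as [_ [_ [_ [_ h]]]].
  destruct (closed_in_Z_compl_locally _ w (proj1 (h z Zz)) Zw (fun H => n (proj2 H)))
    as [e [he He]].
  exists e; split; auto. intros v Zv d1 d2 r. apply (He v Zv d1 d2); auto.
Qed.

Lemma strict_upper_locally (z w : bundle) :
  inZ z -> inZ w -> ~ Rr z w -> Zlocally (fun v => ~ Rr z v) w.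
Proof.
  intros Zz Zw n. destruct hc as [_ [_ [_ [_ h]]]].
  destruct (closed_in_Z_compl_locally _ w (proj2 (h z Zz)) Zw (fun H => n (proj2 H)))
    as [e [he He]].
  exists e; split; auto. intros v Zv d1 d2 r. apply (He v Zv d1 d2); auto.
Qed.

Lemma indiff_on_seg (w p0 p1 : bundle) : inZ w -> inZ p0 -> inZ p1 -> Rr p0 w -> Rr w p1 ->
  exists s, 0 <= s <= 1 /\ Indiff Rr (seg p0 p1 s) w.
Proof.
  intros Zw Z0 Z1 h0 h1. apply NNPP; intro Hn.
  apply (interval_not_separated 0 1 (fun s => ~ Rr w (seg p0 p1 s))
           (fun s => ~ Rr (seg p0 p1 s) w)); [lra | | | | | |].
  - rewrite seg0; intro h; apply Hn; exists 0; rewrite seg0; split; [lra|split; auto].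
  - rewrite seg1; intro h; apply Hn; exists 1; rewrite seg1; split; [lra|split; auto].
  - intros s hs. apply NNPP; intro H. apply Hn; exists s; split; [auto|split; tauto].
  - intros s hs a b. destruct (pref_total w (seg p0 p1 s)); auto. apply seg_inZ; auto.
  - intros s hs a. apply (Zlocally_seg (fun v => ~ Rr w v)); auto.
    apply strict_upper_locally; auto. apply seg_inZ; auto.
  - intros s hs a. apply (Zlocally_seg (fun v => ~ Rr v w)); auto.
    apply strict_lower_locally; auto. apply seg_inZ; auto.
Qed.

End Classical.

Lemma single_crossing_sym (R1 R2 : pref) : single_crossing R1 R2 -> single_crossing R2 R1.
Proof. intros sc z1 z2 x y; intros; eapply (sc z2 z1); eauto. Qed.

Lemma single_crossing_indiff (R1 R2 : pref) (v w : bundle) :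
  classical R1 -> classical R2 -> single_crossing R1 R2 -> inZ v -> inZ w ->
  Indiff R1 v w -> Indiff R2 v w -> v = w.
Proof.
  intros h1 h2 sc Zv Zw i1 i2.
  apply (sc w w v w); auto; split; apply pref_refl; auto.
Qed.

(* [x P2 z] and [z P1 x]; for [x] below [z] this refutes [prec R1 R2]. *)
Definition witness (R1 R2 : pref) (z x : bundle) : Prop := ~ R2 z x /\ ~ R1 x z.

Definition violation (R1 R2 : pref) (z : bundle) : Prop :=
  exists x, inZ x /\ blt x z /\ witness R1 R2 z x.

Definition row_violation (R1 R2 : pref) (z : bundle) (q : R) : Prop :=
  exists t, 0 <= t <= fst z /\ witness R1 R2 z (t, q).

Section Violations.
Variables R1 R2 : pref.
Hypothesis h1 : classical R1.
Hypothesis h2 : classical R2.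

Lemma prec_no_violation (z : bundle) : inZ z -> prec R1 R2 -> ~ violation R1 R2 z.
Proof.
  intros Zz [_ p] [x [Zx [bl [a b]]]].
  apply b, p; [auto | split; auto | apply (pref_compl R2); auto].
Qed.

Lemma violation_of_not_prec : R1 <> R2 -> ~ prec R1 R2 ->
  exists z, inZ z /\ 0 < fst z /\ 0 < snd z /\ violation R1 R2 z.
Proof.
  intros ne np. apply NNPP; intro Hn. apply np; split; auto.
  intros z Zz x [Zx [->|bl]] r2; [apply pref_refl; auto|].
  apply NNPP; intro r1. apply Hn.
  destruct z as [tz qz], x as [tx qx], bl as [b1 b2], Zx as [htx hqx], Zz as [htz hqz].
  simpl in *.
  destruct (Zlocally_up _ tx qx qz ltac:(split; simpl; lra)
              (strict_lower_locally R1 h1 (tz, qz) (tx, qx) ltac:(split; simpl; lra)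
                 ltac:(split; simpl; lra) r1) b2 ltac:(lra)) as [q' [hq' nr1]].
  exists (tz, qz); split; [split; simpl; lra|]; simpl; split; [lra|]; split; [lra|].
  exists (tx, q'); split; [split; simpl; lra|]; split; [split; simpl; lra|]; split; [|exact nr1].
  intro h. apply (pref_q_lt R2 h2 tx qx q'); try lra.
  apply (pref_trans R2 h2 _ (tz, qz)); auto; split; simpl; lra.
Qed.

Lemma violation_locally (z : bundle) : inZ z -> violation R1 R2 z -> Zlocally (violation R1 R2) z.
Proof.
  intros Zz [x [Zx [[b1 b2] [a b]]]].
  destruct (Zlocally_and _ _ _ (strict_lower_locally R2 h2 _ _ Zx Zz a)
              (strict_upper_locally R1 h1 _ _ Zx Zz b)) as [e [he He]].
  set (e' := Rmin e (Rmin (fst z - fst x) (snd z - snd x))).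
  pose proof (Rmin_l e (Rmin (fst z - fst x) (snd z - snd x))).
  pose proof (Rmin_r e (Rmin (fst z - fst x) (snd z - snd x))).
  pose proof (Rmin_l (fst z - fst x) (snd z - snd x)).
  pose proof (Rmin_r (fst z - fst x) (snd z - snd x)).
  assert (0 < e') by (unfold e'; repeat apply Rmin_glb_lt; lra).
  exists e'; split; auto. intros v Zv d1 d2.
  exists x; split; [auto|split].
  - apply Rabs_def2 in d1, d2. split; unfold e' in *; lra.
  - apply He; auto; unfold e' in *; lra.
Qed.

Lemma violation_of_row (z : bundle) (q : R) : inZ z -> 0 <= q < snd z ->
  row_violation R1 R2 z q -> violation R1 R2 z.
Proof.
  intros [htz hqz] hq [t [ht [a b]]].
  assert (t <> fst z).
  { intros ->. apply a. destruct z as [tz qz]; apply (pref_q_le R2 h2); simpl in *; lra. }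
  exists (t, q); split; [split; simpl; lra|split; [split; simpl; lra|split; auto]].
Qed.

Lemma row_violation_exclusive (z : bundle) (q : R) : inZ z -> 0 <= q <= 1 ->
  row_violation R1 R2 z q -> row_violation R2 R1 z q -> False.
Proof.
  intros Zz hq [t [ht [a b]]] [t' [ht' [c d]]].
  assert (Zt : inZ (t, q)) by (split; simpl; lra).
  assert (Zt' : inZ (t', q)) by (split; simpl; lra).
  destruct (Rle_lt_dec t t') as [l|l].
  - apply b, (pref_trans R1 h1 _ (t', q)); auto.
    + apply (pref_t_le R1 h1); lra.
    + apply (pref_compl R1 h1); auto.
  - apply d, (pref_trans R2 h2 _ (t, q)); auto.
    + apply (pref_t_le R2 h2); lra.
    + apply (pref_compl R2 h2); auto.
Qed.

Lemma row_violation_open (z : bundle) (a b : R) : inZ z -> 0 <= a -> b <= 1 ->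
  open_in_interval a b (row_violation R1 R2 z).
Proof.
  intros Zz ha hb q hq [t [ht [c d]]].
  assert (Zt : inZ (t, q)) by (split; simpl; lra).
  destruct (Zlocally_and _ _ _ (strict_upper_locally R2 h2 _ _ Zz Zt c)
              (strict_lower_locally R1 h1 _ _ Zz Zt d)) as [e [he He]].
  exists e; split; auto. intros q' hq' hd. exists t; split; auto.
  apply He; [split; simpl; lra | simpl; apply Rabs_def1; lra | simpl; auto].
Qed.

Hypothesis sc : single_crossing R1 R2.

(* Crossing the [R1]-indifference curve of [z] below [z], single crossing
   makes [R2] strictly rank the crossing point, and moving slightly along
   the row turns it into a witness in one of the two directions. *)
Lemma indiff_split (z v : bundle) : inZ z -> inZ v -> blt v z -> 0 < fst v ->
  Indiff R1 v z -> row_violation R1 R2 z (snd v) \/ row_violation R2 R1 z (snd v).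
Proof.
  intros Zz Zv [b1 b2] hv [i1 i2].
  destruct v as [tv qv], z as [tz qz]; simpl in *.
  pose proof Zv as [_ hqv]; simpl in hqv.
  destruct (classic (R2 (tz, qz) (tv, qv))) as [a|a].
  - destruct (classic (R2 (tv, qv) (tz, qz))) as [c|c].
    + assert (E : (tv, qv) = (tz, qz))
        by (apply (single_crossing_indiff R1 R2); auto; split; auto).
      injection E; lra.
    + destruct (Zlocally_left _ tv qv 0 Zv (strict_lower_locally R2 h2 _ _ Zz Zv c)
                  ltac:(lra)) as [t' [ht' nr2]].
      right; exists t'; split; [simpl; lra|split; [|exact nr2]].
      intro h. apply (pref_t_lt R1 h1 t' tv qv); try lra.
      apply (pref_trans R1 h1 _ (tz, qz)); auto; split; simpl; lra.
  - destruct (Zlocally_right _ tv qv tz Zv (strict_upper_locally R2 h2 _ _ Zz Zv a)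
                b1) as [t' [ht' nr2]].
    left; exists t'; split; [simpl; lra|split; [exact nr2|]].
    intro h. apply (pref_t_lt R1 h1 tv t' qv); try lra.
    apply (pref_trans R1 h1 _ (tz, qz)); auto; split; simpl; lra.
Qed.

End Violations.

Section Crossing.
Variables R1 R2 : pref.
Hypothesis h1 : classical R1.
Hypothesis h2 : classical R2.
Hypothesis sc : single_crossing R1 R2.

Lemma violation_total (w : bundle) : inZ w -> 0 < fst w -> 0 < snd w ->
  violation R1 R2 w \/ violation R2 R1 w.
Proof.
  destruct w as [tw qw]; simpl. intros Zw htw hqw. pose proof Zw as [_ hq1]; simpl in hq1.
  destruct (Zlocally_left _ tw 0 0 ltac:(split; simpl; lra)
              (strict_lower_locally R1 h1 (tw, qw) (tw, 0) Zw ltac:(split; simpl; lra)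
                 (pref_q_lt R1 h1 tw 0 qw ltac:(lra) ltac:(lra) ltac:(lra) ltac:(lra)))
              ltac:(lra)) as [t0 [ht0 n1]].
  destruct (indiff_on_seg R1 h1 (tw, qw) (t0, qw) (t0, 0) Zw ltac:(split; simpl; lra)
              ltac:(split; simpl; lra)) as [s [hs i]].
  { apply (pref_t_le R1 h1); lra. }
  { apply (pref_compl R1 h1); auto; split; simpl; lra. }
  assert (Ev : seg (t0, qw) (t0, 0) s = (t0, qw * (1 - s))) by (unfold seg; simpl; f_equal; ring).
  rewrite Ev in i.
  assert (s <> 0).
  { intros ->. apply (pref_t_lt R1 h1 t0 tw qw); try lra.
    replace (qw * (1 - 0)) with qw in i by ring. apply i. }
  assert (Zv : inZ (t0, qw * (1 - s))) by (split; simpl; nra).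
  assert (hv : 0 <= qw * (1 - s) < qw) by nra.
  destruct (indiff_split R1 R2 h1 h2 sc (tw, qw) (t0, qw * (1 - s))) as [r|r];
    auto; [split; simpl; lra | simpl; lra | |].
  - left; apply (violation_of_row R1 R2 h2 _ (qw * (1 - s))); auto.
  - right; apply (violation_of_row R2 R1 h1 _ (qw * (1 - s))); auto.
Qed.

Lemma row_violation_cover (z : bundle) (tx qa q : R) :
  inZ z -> inZ (tx, qa) -> tx < fst z -> qa <= q < snd z -> witness R1 R2 z (tx, qa) ->
  row_violation R1 R2 z q \/ row_violation R2 R1 z q.
Proof.
  destruct z as [tz qz]; simpl. intros Zz Zx htx hq [a1 _].
  pose proof Zz as [htz hqz]; pose proof Zx as [htx0 hqa]; simpl in *.
  assert (Zq : inZ (tx, q)) by (split; simpl; lra).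
  assert (Zq' : inZ (tz, q)) by (split; simpl; lra).
  assert (c1 : ~ R2 (tz, qz) (tx, q)).
  { intro h. apply a1, (pref_trans R2 h2 _ (tx, q)); auto. apply (pref_q_le R2 h2); lra. }
  destruct (indiff_on_seg R2 h2 (tz, qz) (tx, q) (tz, q) Zz Zq Zq') as [s [hs i]].
  { apply (pref_compl R2 h2); auto. }
  { apply (pref_q_le R2 h2); lra. }
  assert (Ev : seg (tx, q) (tz, q) s = (tx + s * (tz - tx), q)) by (unfold seg; simpl; f_equal; ring).
  rewrite Ev in i.
  assert (s <> 0).
  { intros ->. apply c1. replace (tx + 0 * (tz - tx)) with tx in i by ring. apply i. }
  assert (s <> 1).
  { intros ->. apply (pref_q_lt R2 h2 tz q qz); try lra.
    replace (tx + 1 * (tz - tx)) with tz in i by ring. apply i. }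
  assert (hv : tx < tx + s * (tz - tx) < tz) by (split; nra).
  destruct (indiff_split R2 R1 h2 h1 (single_crossing_sym R1 R2 sc) (tz, qz)
              (tx + s * (tz - tx), q));
    auto; [split; simpl; lra | split; simpl; lra | simpl; lra].
Qed.

Lemma violation_exclusive_rows (z x y : bundle) : inZ z -> inZ x -> inZ y ->
  blt x z -> blt y z -> witness R1 R2 z x -> witness R2 R1 z y -> snd x <= snd y -> False.
Proof.
  intros Zz Zx Zy [bx1 bx2] [by1 by2] wx wy hxy.
  pose proof Zx as [htx hx]; pose proof Zy as [hty hy]; pose proof Zz as [_ hz].
  destruct x as [tx qa], y as [ty qb]; simpl in *.
  apply (interval_not_separated qa qb (row_violation R1 R2 z) (row_violation R2 R1 z)); auto.
  - exists tx; split; [lra|auto].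
  - exists ty; split; [lra|auto].
  - intros q hq. apply (row_violation_cover z tx qa q); auto; lra.
  - intros q hq. apply (row_violation_exclusive R1 R2 h1 h2 z q); auto; lra.
  - apply row_violation_open; auto; lra.
  - apply row_violation_open; auto; lra.
Qed.

End Crossing.

Lemma violation_exclusive (R1 R2 : pref) (z : bundle) :
  classical R1 -> classical R2 -> single_crossing R1 R2 -> inZ z ->
  violation R1 R2 z -> violation R2 R1 z -> False.
Proof.
  intros h1 h2 sc Zz [x [Zx [bx wx]]] [y [Zy [by' wy]]].
  destruct (Rle_lt_dec (snd x) (snd y)).
  - exact (violation_exclusive_rows R1 R2 h1 h2 sc z x y Zz Zx Zy bx by' wx wy r).
  - exact (violation_exclusive_rows R2 R1 h2 h1 (single_crossing_sym R1 R2 sc)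
             z y x Zz Zy Zx by' bx wy wx (Rlt_le _ _ r)).
Qed.

(* The interior of [Z] would otherwise split into the two disjoint open sets where
   [R1], resp. [R2], is violated, both nonempty. *)
Lemma prec_total_of_single_crossing (R1 R2 : pref) :
  classical R1 -> classical R2 -> single_crossing R1 R2 -> R1 <> R2 ->
  prec R1 R2 \/ prec R2 R1.
Proof.
  intros h1 h2 sc ne. apply NNPP; intro Hn.
  destruct (violation_of_not_prec R1 R2 h1 h2 ne ltac:(tauto)) as [z1 [Z1 [a1 [b1 g1]]]].
  destruct (violation_of_not_prec R2 R1 h2 h1 (not_eq_sym ne) ltac:(tauto))
    as [z2 [Z2 [a2 [b2 g2]]]].
  apply (interval_not_separated 0 1 (fun s => violation R1 R2 (seg z1 z2 s))
           (fun s => violation R2 R1 (seg z1 z2 s))); [lra | rewrite seg0 | rewrite seg1 | | | | ];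
    auto.
  - intros s hs. destruct (seg_pos z1 z2 s) as [p q]; auto.
    apply violation_total; auto. apply seg_inZ; auto.
  - intros s hs. apply (violation_exclusive R1 R2); auto. apply seg_inZ; auto.
  - intros s hs g. apply (Zlocally_seg (violation R1 R2)); auto.
    apply violation_locally; auto. apply seg_inZ; auto.
  - intros s hs g. apply (Zlocally_seg (violation R2 R1)); auto.
    apply violation_locally; auto. apply seg_inZ; auto.
Qed.

Section RichDomain.
Variable D : pref -> Prop.
Hypothesis rsc : rich_single_crossing D.

Lemma rsc_classical (R : pref) : D R -> classical R.
Proof. destruct rsc as [h _]; auto. Qed.

Lemma rsc_prec_asym (R1 R2 : pref) : D R1 -> D R2 -> prec R1 R2 -> prec R2 R1 -> False.
Proof.
  intros d1 d2 p12 p21. destruct rsc as [_ [sc _]].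
  assert (Zw : inZ (1, 1/2)) by (split; simpl; lra).
  destruct (violation_total R1 R2 (rsc_classical R1 d1) (rsc_classical R2 d2)
              (sc R1 R2 d1 d2 (proj1 p12)) (1, 1/2) Zw) as [v|v]; simpl; try lra.
  - exact (prec_no_violation R1 R2 (rsc_classical R2 d2) _ Zw p12 v).
  - exact (prec_no_violation R2 R1 (rsc_classical R1 d1) _ Zw p21 v).
Qed.

Lemma rsc_prec_trans (a b c : pref) : D a -> D b -> D c -> prec a b -> prec b c -> prec a c.
Proof.
  intros da db dc pab pbc. split.
  - intros e; subst c. exact (rsc_prec_asym a b da db pab pbc).
  - intros z Zz x bx r. apply (proj2 pab); auto. apply (proj2 pbc); auto.
Qed.

Lemma rsc_prec_total (a b : pref) : D a -> D b -> a <> b -> prec a b \/ prec b a.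
Proof.
  intros da db ne. destruct rsc as [_ [sc _]].
  apply prec_total_of_single_crossing; auto; apply rsc_classical; auto.
Qed.

Lemma prec_of_box_witness (M R : pref) (z x : bundle) : D M -> D R -> inZ z -> box z x ->
  M x z -> ~ R x z -> prec M R.
Proof.
  intros dM dR Zz bx mx nr.
  destruct (rsc_prec_total M R dM dR) as [p|p]; auto.
  - intros ->; contradiction.
  - exfalso; apply nr, (proj2 p); auto.
Qed.

Lemma rsc_prec_above (M : pref) : D M -> exists R, D R /\ prec M R.
Proof.
  intro dM. pose proof (rsc_classical M dM) as cM. destruct rsc as [_ [_ rich]].
  assert (Z0 : inZ (0, 0)) by (split; simpl; lra).
  destruct (Zlocally_up _ 1 0 1 ltac:(split; simpl; lra)
              (strict_lower_locally M cM (0, 0) (1, 0) Z0 ltac:(split; simpl; lra)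
                 (pref_t_lt M cM 0 1 0 ltac:(lra) ltac:(lra) ltac:(lra)))
              ltac:(lra) ltac:(lra)) as [q [hq nM]].
  assert (Zz : inZ (1, q)) by (split; simpl; lra).
  assert (Zx : inZ (0, q / 2)) by (split; simpl; lra).
  destruct (rich 0 (q / 2) 1 q Zx Zz ltac:(lra) ltac:(lra)) as [R [dR [_ i2]]].
  pose proof (rsc_classical R dR) as cR.
  exists R; split; auto.
  apply (prec_of_box_witness M R (1, q) (0, 0)); auto.
  - split; auto; right; split; simpl; lra.
  - apply (pref_compl M cM); auto.
  - intro h. apply (pref_q_lt R cR 0 0 (q / 2)); try lra.
    apply (pref_trans R cR _ (1, q)); auto.
Qed.

Lemma rsc_prec_below (m : pref) : D m -> exists R, D R /\ prec R m.
Proof.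
  intro dm. pose proof (rsc_classical m dm) as cm. destruct rsc as [_ [_ rich]].
  assert (Z0 : inZ (0, 0)) by (split; simpl; lra).
  destruct (Zlocally_right _ 0 1 1 ltac:(split; simpl; lra)
              (strict_upper_locally m cm (0, 0) (0, 1) Z0 ltac:(split; simpl; lra)
                 (pref_q_lt m cm 0 0 1 ltac:(lra) ltac:(lra) ltac:(lra) ltac:(lra)))
              ltac:(lra)) as [t [ht nm]].
  assert (Zz : inZ (t, 1)) by (split; simpl; lra).
  assert (Zx : inZ (t / 2, 0)) by (split; simpl; lra).
  destruct (rich (t / 2) 0 t 1 Zx Zz ltac:(lra) ltac:(lra)) as [R [dR [i1 _]]].
  pose proof (rsc_classical R dR) as cR.
  exists R; split; auto.
  apply (prec_of_box_witness R m (t, 1) (0, 0)); auto.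
  - split; auto; right; split; simpl; lra.
  - apply (pref_trans R cR _ (t / 2, 0)); auto. apply (pref_t_le R cR); lra.
Qed.

End RichDomain.

Lemma prec_irrefl (R : pref) : ~ prec R R.
Proof. intros [ne _]; auto. Qed.

Section OrderTopology.
Variable D : pref -> Prop.
Hypothesis D_prec_trans : forall a b c, D a -> D b -> D c -> prec a b -> prec b c -> prec a c.
Hypothesis D_prec_total : forall a b, D a -> D b -> a <> b -> prec a b \/ prec b a.
Hypothesis D_prec_above : forall a, D a -> exists b, D b /\ prec a b.
Hypothesis D_prec_below : forall b, D b -> exists a, D a /\ prec a b.

Lemma D_prec_max (a1 a2 : pref) : D a1 -> D a2 ->
  exists a, (a = a1 \/ a = a2) /\ forall R, D R -> prec a R -> prec a1 R /\ prec a2 R.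
Proof.
  intros d1 d2. destruct (classic (prec a1 a2)) as [l|nl].
  - exists a2; split; auto. intros R dR h; split; eauto.
  - exists a1; split; auto. intros R dR h; split; auto.
    destruct (classic (a1 = a2)) as [<-|ne]; auto.
    destruct (D_prec_total a1 a2 d1 d2 ne) as [l|l]; [contradiction|eauto].
Qed.

Lemma D_prec_min (b1 b2 : pref) : D b1 -> D b2 ->
  exists b, (b = b1 \/ b = b2) /\ forall R, D R -> prec R b -> prec R b1 /\ prec R b2.
Proof.
  intros d1 d2. destruct (classic (prec b1 b2)) as [l|nl].
  - exists b1; split; auto. intros R dR h; split; eauto.
  - exists b2; split; auto. intros R dR h; split; auto.
    destruct (classic (b1 = b2)) as [<-|ne]; auto.
    destruct (D_prec_total b1 b2 d1 d2 ne) as [l|l]; [contradiction|eauto].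
Qed.

Lemma order_open_interval (O : pref -> Prop) : order_open D O ->
  forall R0, D R0 -> O R0 -> exists a b, D a /\ D b /\ prec a R0 /\ prec R0 b /\
    forall R, D R -> prec a R -> prec R b -> O R.
Proof.
  induction 1 as [|a' da'|b' db'|O1 O2 _ IH1 _ IH2|F _ IH]; intros R0 d0 HR0.
  - destruct (D_prec_below R0 d0) as [a [da ha]], (D_prec_above R0 d0) as [b [db hb]].
    exists a, b; repeat (split; [assumption|]); auto.
  - destruct HR0 as [_ ha], (D_prec_above R0 d0) as [b [db hb]].
    exists a', b; repeat (split; [assumption|]); auto.
  - destruct HR0 as [_ hb], (D_prec_below R0 d0) as [a [da ha]].
    exists a, b'; repeat (split; [assumption|]); auto.
  - destruct HR0 as [o1 o2].
    destruct (IH1 R0 d0 o1) as [a1 [b1 [da1 [db1 [ha1 [hb1 H1]]]]]].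
    destruct (IH2 R0 d0 o2) as [a2 [b2 [da2 [db2 [ha2 [hb2 H2]]]]]].
    destruct (D_prec_max a1 a2 da1 da2) as [a [ea Ha]].
    destruct (D_prec_min b1 b2 db1 db2) as [b [eb Hb]].
    exists a, b.
    assert (D a /\ prec a R0) as [da ha] by (destruct ea as [-> | ->]; auto).
    assert (D b /\ prec R0 b) as [db hb] by (destruct eb as [-> | ->]; auto).
    repeat (split; [assumption|]).
    intros R dR h1 h2. destruct (Ha R dR h1), (Hb R dR h2); split; auto.
  - destruct HR0 as [O' [fO o']].
    destruct (IH O' fO R0 d0 o') as [a [b [da [db [ha [hb H]]]]]].
    exists a, b; repeat (split; [assumption|]). intros R dR h1 h2; exists O'; auto.
Qed.

(* If [R0] is not in [U], every element of [U] is above [R0], and some lies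
   below the right end of any interval around [R0], since that end is not a
   lower bound. *)
Lemma inf_in_order_closure (U : pref -> Prop) (R0 : pref) :
  (forall R, U R -> D R) -> is_inf D U R0 -> in_order_closure D U R0.
Proof.
  intros UD [d0 [lb glb]]. split; auto. intros O HO HR0.
  destruct (order_open_interval O HO R0 d0 HR0) as [a [b [da [db [ha [hb Hab]]]]]].
  destruct (classic (U R0)) as [u0|u0]; [exists R0; auto|].
  destruct (classic (exists R, U R /\ prec R b)) as [[R [u hR]]|none].
  - exists R; split; auto. apply Hab; auto.
    destruct (lb R u) as [<-|l]; [contradiction | eauto].
  - exfalso.
    assert (lbb : forall R, U R -> b = R \/ prec b R).
    { intros R u. destruct (classic (b = R)) as [e|ne]; auto.
      destruct (D_prec_total b R db (UD R u) ne); eauto. exfalso; eauto. }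
    destruct (glb b db lbb) as [<-|l].
    + exact (prec_irrefl b hb).
    + exact (prec_irrefl R0 (D_prec_trans R0 b R0 d0 db d0 hb l)).
Qed.

Lemma sup_in_order_closure (U : pref -> Prop) (R0 : pref) :
  (forall R, U R -> D R) -> is_sup D U R0 -> in_order_closure D U R0.
Proof.
  intros UD [d0 [ub lub]]. split; auto. intros O HO HR0.
  destruct (order_open_interval O HO R0 d0 HR0) as [a [b [da [db [ha [hb Hab]]]]]].
  destruct (classic (U R0)) as [u0|u0]; [exists R0; auto|].
  destruct (classic (exists R, U R /\ prec a R)) as [[R [u hR]]|none].
  - exists R; split; auto. apply Hab; auto.
    destruct (ub R u) as [->|l]; [contradiction | eauto].
  - exfalso.
    assert (uba : forall R, U R -> R = a \/ prec R a).
    { intros R u. destruct (classic (R = a)) as [e|ne]; auto.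
      destruct (D_prec_total R a (UD R u) da ne); eauto. exfalso; eauto. }
    destruct (lub a da uba) as [->|l].
    + exact (prec_irrefl a ha).
    + exact (prec_irrefl R0 (D_prec_trans R0 a R0 d0 da d0 l ha)).
Qed.

End OrderTopology.

Theorem mainTheorem2 (D : pref -> Prop) (U : pref -> Prop) :
  rich_single_crossing D ->
  (forall Rr, U Rr -> D Rr) ->
  (forall R0, is_inf D U R0 -> in_order_closure D U R0) /\
  (forall R0, is_sup D U R0 -> in_order_closure D U R0).
Proof.
  intros rsc UD. split; intros R0.
  - apply (inf_in_order_closure D (rsc_prec_trans D rsc) (rsc_prec_total D rsc)
             (rsc_prec_above D rsc) (rsc_prec_below D rsc) U R0 UD).
  - apply (sup_in_order_closure D (rsc_prec_trans D rsc) (rsc_prec_total D rsc)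
             (rsc_prec_above D rsc) (rsc_prec_below D rsc) U R0 UD).
Qed.
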